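(* Let $\mathcal{H}$ be a hierarchical generator. Then there exist positive coefficients $c_\varphi>0$, $\varphi\in\mathcal{H}$, such that $\sum_{\varphi\in\mathcal{H}}c_\varphi\varphi=1$ on $\Omega=[0,1]^d$.
   Context: Fix integers $d\ge1$, $n\ge2$, $m\ge2$; $s=n-1$, $p=m-1$. B-splines $\varphi^\ell_{\vec i}(\vec x)=\prod_kQ(n^\ell x_k-i_k)$ for $\ell\in\mathbb{Z}_{\ge0}$, $\vec i\in\mathbb{Z}^d$, where $Q$ is the uniform B-spline of order $m$ with knots $0,\dots,m$ normalized so that its integer translates sum to one; $\mathfrak{B}$ the set of all of them. $\mathcal{B}^0=\{\varphi^0_{\vec i}:\vec i\in[-p:0]^d\}$ (these sum to $1$ on $[0,1]^d$). Children $\mathrm{ch}(\varphi^\ell_{\vec i})=\{\varphi^{\ell+1}_{\vec k}:n\vec i\le\vec k\le n\vec i+sm\}$, extended to sets by union. A lineage is a finite $\mathcal{L}\subset\mathfrak{B}$ with $\mathcal{L}\subset\mathcal{B}^0\cup\mathrm{ch}(\mathcal{L})$; its hierarchical generator is $(\mathcal{B}^0\cup\mathrm{ch}(\mathcal{L}))\setminus\mathcal{L}$, and a hierarchical generator is any set arising this way. *)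

From HB Require Import structures.
From mathcomp Require Import all_boot all_order all_algebra.
Set Implicit Arguments. Unset Strict Implicit. Unset Printing Implicit Defensive.
Import Order.TTheory GRing.Theory Num.Theory.
Local Open Scope ring_scope.

(* A B-spline phi^l_i is identified by its level l and its index i in Z^d. *)
Definition bidx (d : nat) := (nat * d.-tuple int)%type.

(* Uniform (cardinal) B-spline of order m with knots 0,...,m, normalized so that
   its integer translates sum to one (equivalently, integral one):
   Q(x) = 1/(m-1)! * sum_{k=0}^m (-1)^k C(m,k) (x-k)_+^(m-1). *)
Definition Qspl (R : realFieldType) (m : nat) (x : R) : R :=
  ((m.-1)`!%:R)^-1 *
  \sum_(k < m.+1) (-1) ^+ k * ('C(m, k))%:R * (Num.max (x - k%:R) 0) ^+ m.-1.

Definition bspline (R : realFieldType) (d n m : nat) (b : bidx d)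
    (x : 'I_d -> R) : R :=
  \prod_(k < d) Qspl m ((n%:R) ^+ b.1 * x k - (tnth b.2 k)%:~R).

Definition inB0 (d m : nat) (b : bidx d) : bool :=
  (b.1 == 0%N) &&
  [forall k : 'I_d, (- (m.-1)%:Z <= tnth b.2 k) && (tnth b.2 k <= 0)].

Definition child (d n m : nat) (a b : bidx d) : bool :=
  (b.1 == a.1.+1) &&
  [forall j : 'I_d,
     (n%:Z * tnth a.2 j <= tnth b.2 j) &&
     (tnth b.2 j <= n%:Z * tnth a.2 j + ((n.-1) * m)%N%:Z)].

Definition in_ch (d n m : nat) (L : seq (bidx d)) (b : bidx d) : bool :=
  has (fun a => child n m a b) L.

Definition lineage (d n m : nat) (L : seq (bidx d)) : Prop :=
  forall b, b \in L -> inB0 m b || in_ch n m L b.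

Definition hgen_of (d n m : nat) (L H : seq (bidx d)) : Prop :=
  uniq H /\
  forall b, (b \in H) = ((inB0 m b || in_ch n m L b) && (b \notin L)).

Definition hier_generator (d n m : nat) (H : seq (bidx d)) : Prop :=
  exists L : seq (bidx d), lineage n m L /\ hgen_of n m L H.

(* The univariate B-spline [Q] is [1/(m-1)!] times the [m]-th backward
   difference of the truncated power [max(y,0)^(m-1)]; differences are encoded
   by letting polynomials act on functions by shifts.  The factorisation
   [(1 - X^n)^m = (1 - X)^m (1 + X + ... + X^(n-1))^m] then yields the
   refinement relation writing [Q] as a combination of the [Q(n . - k)],
   [0 <= k <= (n-1)m], with positive coefficients, while telescoping shows
   that the [m] translates of [Q] meeting [[0,1]] sum to one there.
   Tensorising, [B^0] is a partition of unity on the cube and every B-spline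
   is a positive combination of its children.  Finally, an element [psi] of
   maximal level in a lineage [L] is the parent of no element of [L], so the
   generator of [L] is that of [L \ {psi}] with [psi] replaced by its
   children; induction on the size of the lineage concludes. *)

From HB Require Import structures.
From mathcomp Require Import all_boot all_order all_algebra.
From mathcomp Require Import zify ring lra.
Set Implicit Arguments. Unset Strict Implicit. Unset Printing Implicit Defensive.
Import Order.TTheory GRing.Theory Num.Theory.
Local Open Scope ring_scope.

Section PolyShift.
Variable R : realFieldType.

(* ['X] acts as the shift [f |-> f (. - h)], so [(1 - 'X) ^+ m] acts as the
   [m]-th backward difference of step [h]. *)
Definition pshift (h : R) (P : {poly R}) (f : R -> R) (x : R) : R :=
  \sum_(k < size P) P`_k * f (x - k%:R * h).

Lemma pshift_widen N h (P : {poly R}) f x : (size P <= N)%N ->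
  pshift h P f x = \sum_(k < N) P`_k * f (x - k%:R * h).
Proof.
move=> szP; rewrite /pshift (big_ord_widen N (fun k => P`_k * f (x - k%:R * h)) szP).
rewrite big_mkcond; apply: eq_bigr => k _; case: ltnP => // hk.
by rewrite nth_default // mul0r.
Qed.
Arguments pshift_widen N {h P f x}.

Lemma eq_pshift h P (f g : R -> R) x : f =1 g -> pshift h P f x = pshift h P g x.
Proof. by move=> fg; apply: eq_bigr => k _; rewrite fg. Qed.

Lemma pshift0 h f x : pshift h 0 f x = 0.
Proof. by rewrite /pshift size_poly0 big_ord0. Qed.

Lemma pshiftD h (P Q : {poly R}) f x :
  pshift h (P + Q) f x = pshift h P f x + pshift h Q f x.
Proof.
set N := maxn (size P) (size Q).
rewrite (pshift_widen N) ?size_polyD // (pshift_widen N (P := P)) ?leq_maxl //.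
rewrite (pshift_widen N (P := Q)) ?leq_maxr // -big_split.
by apply: eq_bigr => k _; rewrite coefD mulrDl.
Qed.

Lemma pshiftZ h c (P : {poly R}) f x : pshift h (c *: P) f x = c * pshift h P f x.
Proof.
rewrite (pshift_widen (size P)) ?size_scale_leq // /pshift mulr_sumr.
by apply: eq_bigr => k _; rewrite coefZ mulrA.
Qed.

Lemma pshiftC h c f x : pshift h c%:P f x = c * f x.
Proof.
by rewrite (pshift_widen 1) ?size_polyC ?leq_b1 // big_ord1 coefC mul0r subr0.
Qed.

Lemma pshiftMX h (P : {poly R}) f x : pshift h (P * 'X) f x = pshift h P f (x - h).
Proof.
rewrite (pshift_widen (size P).+1); last first.
  by have [->|nzP] := eqVneq P 0; rewrite ?mul0r ?size_poly0 // size_mulX.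
rewrite big_ord_recl coefMX mul0r add0r /pshift; apply: eq_bigr => k _.
rewrite coefMX /= /bump /= add1n -addn1 natrD mulrDl mul1r.
by congr (_ * f _); rewrite opprD addrA addrAC.
Qed.

Lemma pshiftM h (P Q : {poly R}) f x :
  pshift h (P * Q) f x = pshift h P (pshift h Q f) x.
Proof.
elim/poly_ind: P f x => [|P c IH] f x; first by rewrite mul0r !pshift0.
rewrite mulrDl mulrAC pshiftD pshiftMX IH mul_polyC pshiftZ.
by rewrite pshiftD pshiftMX pshiftC.
Qed.

Lemma pshift_sum h I (r : seq I) (F : I -> {poly R}) f x :
  pshift h (\sum_(i <- r) F i) f x = \sum_(i <- r) pshift h (F i) f x.
Proof.
elim: r => [|a r IH]; first by rewrite !big_nil pshift0.
by rewrite !big_cons pshiftD IH.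
Qed.

Lemma pshiftXn h e f x : pshift h 'X^e f x = f (x - e%:R * h).
Proof.
elim: e x => [|e IH] x; first by rewrite expr0 -polyC1 pshiftC mul1r mul0r subr0.
rewrite exprSr pshiftMX IH -addn1 natrD mulrDl mul1r.
by congr f; rewrite opprD addrA addrAC.
Qed.

Lemma pshift_sumf h P I (r : seq I) (g : I -> R -> R) x :
  pshift h P (fun y => \sum_(i <- r) g i y) x = \sum_(i <- r) pshift h P (g i) x.
Proof.
by rewrite /pshift exchange_big; apply: eq_bigr => k _; rewrite mulr_sumr.
Qed.

Lemma pshiftZf h P c (g : R -> R) x :
  pshift h P (fun y => c * g y) x = c * pshift h P g x.
Proof. by rewrite /pshift mulr_sumr; apply: eq_bigr => k _; rewrite mulrCA. Qed.

Lemma pshift_binomial h e j f x :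
  pshift h ((1 - 'X^e) ^+ j) f x =
  \sum_(i < j.+1) (-1) ^+ i * 'C(j, i)%:R * f (x - (e * i)%:R * h).
Proof.
rewrite addrC exprD1n pshift_sum; apply: eq_bigr => i _.
rewrite -scaler_nat -scaleN1r exprZn -exprM !pshiftZ pshiftXn.
by rewrite mulrA (mulrC _%:R).
Qed.

Lemma pshift_diff h j f x :
  pshift h ((1 - 'X) ^+ j) f x =
  \sum_(i < j.+1) (-1) ^+ i * 'C(j, i)%:R * f (x - i%:R * h).
Proof.
rewrite -['X]expr1 pshift_binomial.
by apply: eq_bigr => i _; rewrite mul1n.
Qed.

Lemma subXn_factor n : 1 - 'X^n = (1 - 'X) * \sum_(j < n) 'X^j :> {poly R}.
Proof.
rewrite -{1}(expr1n _ n) subrXX; congr (_ * _).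
by apply: eq_bigr => i _; rewrite expr1n mul1r.
Qed.

End PolyShift.
Arguments pshift_widen {R} N {h P f x}.

Section UnivariateSpline.
Variable R : realFieldType.

Lemma pshift_diff_monomial q (w : R) :
  pshift 1 (1 - 'X) (fun y => y ^+ q) w =
  \sum_(i < q) (-1) ^+ i * 'C(q, i.+1)%:R * w ^+ (q - i.+1).
Proof.
transitivity (w ^+ q - (w - 1) ^+ q).
  rewrite -[1 - 'X]expr1 pshift_diff !big_ord_recr big_ord0 /= bin0 binn.
  by rewrite expr0 expr1 mul0r subr0 !mul1r mulr1 mulN1r add0r.
rewrite (exprDn w (-1)) big_ord_recl subn0 expr0 mulr1 bin0 mulr1n.
rewrite opprD addrA subrr add0r -sumrN; apply: eq_bigr => i _.
rewrite lift0 exprS -mulr_natr; ring.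
Qed.

Lemma pshift_diff_pow j q (z : R) : (q <= j)%N ->
  pshift 1 ((1 - 'X) ^+ j) (fun w => w ^+ q) z = if q == j then j`!%:R else 0.
Proof.
elim: j q z => [|j IH] q z hq.
  have -> : q = 0%N by lia.
  by rewrite expr0 -polyC1 pshiftC mul1r expr0.
rewrite exprSr pshiftM (eq_pshift _ _ _ (@pshift_diff_monomial q)) pshift_sumf.
have sub_le i : (q - i.+1 <= j)%N by lia.
under eq_bigr => i _ do rewrite pshiftZf (IH _ _ (sub_le i)).
have [->|neq] := eqVneq q j.+1.
  rewrite big_ord_recl subSS subn0 eqxx expr0 mul1r bin1 factS natrM big1 ?addr0 //.
  move=> i _; rewrite lift0 (_ : (_ == _) = false) ?mulr0 //.
  by apply/negbTE/eqP; have := ltn_ord i; lia.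
rewrite big1 // => i _; move: neq; have := ltn_ord i => hi /eqP neq.
by rewrite (_ : (_ == _) = false) ?mulr0 //; apply/negbTE/eqP; lia.
Qed.

Definition tpow (p : nat) (y : R) : R := Num.max y 0 ^+ p.

Lemma Qspl_pshift m x :
  Qspl m x = (m.-1)`!%:R^-1 * pshift 1 ((1 - 'X) ^+ m) (tpow m.-1) x.
Proof.
rewrite pshift_diff /Qspl; congr (_ * _).
by apply: eq_bigr => i _; rewrite mulr1.
Qed.

Lemma tpowZ p (c y : R) : 0 <= c -> tpow p (c * y) = c ^+ p * tpow p y.
Proof. by move=> c0; rewrite /tpow -exprMn maxr_pMr // mulr0. Qed.

Lemma pshift_tpowZ (c : R) P p y : 0 < c ->
  pshift 1 P (tpow p) (c * y) = c ^+ p * pshift c^-1 P (tpow p) y.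
Proof.
move=> c0; rewrite /pshift mulr_sumr; apply: eq_bigr => k _.
rewrite mulrCA -tpowZ ?ltW //; congr (_ * tpow p _).
by field; rewrite gt_eqF.
Qed.

Definition refinement_mask (n m : nat) : {poly R} := (\sum_(j < n) 'X^j) ^+ m.

Lemma coef_refinement_mask n m i : (0 < n)%N ->
  [/\ 0 <= (refinement_mask n m)`_i,
      (n.-1 * m < i)%N -> (refinement_mask n m)`_i = 0
    & (i <= n.-1 * m)%N -> 0 < (refinement_mask n m)`_i].
Proof.
move=> n0; elim: m i => [|m IH] i.
  by rewrite /refinement_mask expr0 coef1; case: i => [|i] /=; split => //; lia.
have -> : (refinement_mask n m.+1)`_i =
    \sum_(j < n) (if (i < j)%N then 0 else (refinement_mask n m)`_(i - j)).
  rewrite /refinement_mask exprSr mulr_sumr coef_sum.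
  by apply: eq_bigr => j _; rewrite coefMXn.
have coef_ge0 j : 0 <= (if (i < j)%N then 0 else (refinement_mask n m)`_(i - j)).
  by case: ifP => // _; case: (IH (i - j)%N).
split; first exact: sumr_ge0.
  move=> hi; apply: big1 => j _; case: ifP => // _; have := ltn_ord j => hj.
  by case: (IH (i - j)%N) => _ -> //; lia.
rewrite mulnS => hi; have hj0 : (minn i n.-1 < n)%N by lia.
rewrite (bigD1 (Ordinal hj0)) //=; apply: ltr_pwDl; last exact: sumr_ge0.
rewrite (_ : (i < minn i n.-1)%N = false); last by lia.
case: (IH (i - minn i n.-1)%N) => _ _; apply.
by move: hi; move: (n.-1 * m)%N => k; lia.
Qed.

Lemma size_refinement_mask n m : (0 < n)%N ->
  (size (refinement_mask n m) <= (n.-1 * m).+1)%N.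
Proof.
by move=> n0; apply/leq_sizeP => j hj; case: (coef_refinement_mask m j n0) => _ ->.
Qed.

(* [(1 - 'X^n) ^+ m = (1 - 'X) ^+ m * refinement_mask n m], and the [m]-th
   difference of step [1/n] of the homogeneous [tpow] is a rescaled B-spline. *)
Lemma Qspl_refine n m y : (0 < n)%N ->
  Qspl m y = \sum_(k < (n.-1 * m).+1)
     ((refinement_mask n m)`_k / n%:R ^+ m.-1) * Qspl m (n%:R * y - k%:R).
Proof.
move=> n0; have nR : (0 : R) < n%:R by rewrite ltr0n.
have nz : (n%:R : R) != 0 by rewrite gt_eqF.
have step_1n : pshift 1 ((1 - 'X) ^+ m) (tpow m.-1) y =
               pshift n%:R^-1 ((1 - 'X^n) ^+ m) (tpow m.-1) y.
  rewrite pshift_diff pshift_binomial; apply: eq_bigr => i _.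
  by congr (_ * tpow _ _); rewrite natrM; field.
rewrite Qspl_pshift step_1n subXn_factor exprMn (mulrC ((1 - 'X) ^+ m)) pshiftM.
rewrite (pshift_widen (n.-1 * m).+1) ?size_refinement_mask // mulr_sumr.
apply: eq_bigr => k _.
rewrite Qspl_pshift -[n%:R * y - k%:R](_ : n%:R * (y - k%:R * n%:R^-1) = _); last by field.
rewrite pshift_tpowZ //; field.
by rewrite expf_neq0 // andbT pnatr_eq0 -lt0n fact_gt0.
Qed.

(* The [m] translates meeting [y] telescope to [Delta^(m-1) tpow(m-1)] evaluated
   where every argument is nonnegative (giving [(m-1)!]), minus a term where every
   argument is nonpositive (giving 0). *)
Lemma Qspl_partition_unity m (y : R) : (1 < m)%N -> 0 <= y <= 1 ->
  \sum_(j < m) Qspl m (y + (m.-1)%:R - j%:R) = 1.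
Proof.
case: m => // p; rewrite ltnS /= => p0 /andP[y0 y1].
set z := y + p%:R.
have telescope : \sum_(j < p.+1) pshift 1 ((1 - 'X) ^+ p.+1) (tpow p) (z - j%:R) =
    pshift 1 (1 - 'X^(p.+1)) (pshift 1 ((1 - 'X) ^+ p) (tpow p)) z.
  rewrite -pshiftM subXn_factor -mulrA mulrCA -exprS pshiftM pshift_sum.
  by apply: eq_bigr => j _; rewrite pshiftXn mulr1.
have vanish : pshift 1 ((1 - 'X) ^+ p) (tpow p) (z - p.+1%:R) = 0.
  rewrite pshift_diff big1 // => i _.
  have -> : tpow p (z - p.+1%:R - i%:R * 1) = 0.
    rewrite /tpow (_ : Num.max _ 0 = 0) ?expr0n ?gtn_eqF //.
    apply/max_idPr; rewrite /z -natr1 mulr1.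
    have : (0 : R) <= i%:R by rewrite ler0n.
    lra.
  by rewrite mulr0.
have polynomial : pshift 1 ((1 - 'X) ^+ p) (tpow p) z = p`!%:R.
  have := pshift_diff_pow z (leqnn p); rewrite eqxx => <-; rewrite !pshift_diff.
  apply: eq_bigr => i _; congr (_ * (_ ^+ _)); apply/max_idPl.
  have : (i%:R : R) <= p%:R by rewrite ler_nat -ltnS.
  rewrite /z mulr1; lra.
under eq_bigr => j _ do rewrite Qspl_pshift.
rewrite -mulr_sumr telescope -[1 - 'X^(p.+1)]expr1 pshift_binomial.
rewrite !big_ord_recr big_ord0 /= add0r expr0 bin0 mul1r muln0 mul0r subr0.
rewrite expr1 bin1 muln1 !mulr1 mulN1r vanish polynomial subr0 mul1r mulVf //.
by rewrite pnatr_eq0 -lt0n fact_gt0.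
Qed.

End UnivariateSpline.

Section IndexBoxes.
Variable d : nat.

Definition in_box (l : nat) (lo : d.-tuple int) (w : nat) (b : bidx d) : bool :=
  (b.1 == l) &&
  [forall k, (tnth lo k <= tnth b.2 k) && (tnth b.2 k <= tnth lo k + w%:Z)].

Definition box_elt (l : nat) (lo : d.-tuple int) (w : nat)
    (f : {ffun 'I_d -> 'I_w.+1}) : bidx d :=
  (l, [tuple tnth lo k + (f k : nat)%:Z | k < d]).

Lemma box_elt_inj l lo w : injective (@box_elt l lo w).
Proof.
move=> f g /(congr1 snd) E; apply/ffunP => k.
have := congr1 (fun t => tnth t k) E; rewrite /= !tnth_mktuple => /addrI [] ?.
exact: val_inj.
Qed.

Lemma big_box (V : nmodType) (U : seq (bidx d)) l lo w (F : bidx d -> V) :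
  uniq U -> (forall b, in_box l lo w b -> b \in U) ->
  \sum_(b <- U | in_box l lo w b) F b =
  \sum_(f : {ffun 'I_d -> 'I_w.+1}) F (box_elt l lo f).
Proof.
move=> uU sub; rewrite -big_filter -(big_map (@box_elt l lo w) xpredT F).
apply/perm_big/uniq_perm; first exact: filter_uniq.
  by rewrite map_inj_uniq ?index_enum_uniq //; apply: box_elt_inj.
move=> b; rewrite mem_filter; apply/idP/idP.
  case/andP=> /andP[/eqP b1 /forallP bk] _.
  apply/mapP; exists [ffun k => inord `|tnth b.2 k - tnth lo k|%N : 'I_w.+1];
    first exact: mem_index_enum.
  case: b b1 bk => b1 b2 /= -> bk; congr (_, _); apply: eq_from_tnth => k.
  rewrite tnth_mktuple ffunE; have /andP[lo_b b_hi] := bk k.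
  by rewrite inordK; lia.
case/mapP => f _ ->; have inb : in_box l lo w (box_elt l lo f).
  rewrite /in_box eqxx; apply/forallP => k; rewrite tnth_mktuple.
  by case: (f k) => j /= j_lt; lia.
by rewrite inb sub.
Qed.

End IndexBoxes.

Section TensorSpline.
Variable R : realFieldType.
Variables d n m : nat.
Hypothesis n_gt0 : (0 < n)%N.
Hypothesis m_gt1 : (1 < m)%N.

Definition B0_corner : d.-tuple int := [tuple - (m.-1)%:Z | k < d].
Definition child_corner (a : bidx d) : d.-tuple int :=
  [tuple n%:Z * tnth a.2 k | k < d].

Lemma inB0_box b : inB0 m b = in_box 0 B0_corner m.-1 b.
Proof.
rewrite /inB0 /in_box; congr andb; apply: eq_forallb => k.
by rewrite tnth_mktuple addNr.
Qed.

Lemma child_box a b : child n m a b = in_box a.1.+1 (child_corner a) (n.-1 * m) b.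
Proof.
by rewrite /child /in_box; congr andb; apply: eq_forallb => k; rewrite tnth_mktuple.
Qed.

Lemma bspline_box_elt l lo w (f : {ffun 'I_d -> 'I_w.+1}) (x : 'I_d -> R) :
  bspline n m (box_elt l lo f) x =
  \prod_k Qspl m (n%:R ^+ l * x k - (tnth lo k + (f k : nat)%:Z)%:~R).
Proof. by apply: eq_bigr => k _; rewrite tnth_mktuple. Qed.

(* Expanding the product of the univariate partitions of unity over the box B^0. *)
Lemma sum_B0_bspline (U : seq (bidx d)) (x : 'I_d -> R) :
  uniq U -> (forall b, inB0 m b -> b \in U) -> (forall k, 0 <= x k <= 1) ->
  \sum_(b <- U | inB0 m b) bspline n m b x = 1.
Proof.
move=> uU sub hx.
rewrite (eq_bigl _ _ inB0_box) big_box //; last by move=> b; rewrite -inB0_box; apply: sub.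
under eq_bigr => f _ do rewrite bspline_box_elt.
rewrite -(bigA_distr_bigA (fun k (j : 'I_(m.-1).+1) =>
   Qspl m (n%:R ^+ 0 * x k - (tnth B0_corner k + (j : nat)%:Z)%:~R))).
apply: big1 => k _; have -> : (m.-1).+1 = m by lia.
rewrite -[RHS](Qspl_partition_unity m_gt1 (hx k)); apply: eq_bigr => j _.
by rewrite tnth_mktuple expr0 mul1r intrD intrN opprD opprK addrA.
Qed.

Definition child_coef (a b : bidx d) : R :=
  \prod_k ((refinement_mask R n m)`_(`|(tnth b.2 k - n%:Z * tnth a.2 k)%R|%N)
           / n%:R ^+ m.-1).

Lemma bspline_refine (U : seq (bidx d)) (a : bidx d) (x : 'I_d -> R) :
  uniq U -> (forall b, child n m a b -> b \in U) ->
  bspline n m a x = \sum_(b <- U | child n m a b) child_coef a b * bspline n m b x.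
Proof.
move=> uU sub.
rewrite (eq_bigl _ _ (child_box a)) big_box //; last by move=> b; rewrite -child_box; apply: sub.
pose G k (j : 'I_(n.-1 * m).+1) := (refinement_mask R n m)`_j / n%:R ^+ m.-1 *
   Qspl m (n%:R ^+ a.1.+1 * x k - (n%:Z * tnth a.2 k + (j : nat)%:Z)%:~R).
transitivity (\sum_(f : {ffun 'I_d -> 'I_(n.-1 * m).+1}) \prod_k G k (f k)).
  rewrite -bigA_distr_bigA; apply: eq_bigr => k _.
  rewrite (Qspl_refine _ _ n_gt0); apply: eq_bigr => j _; congr (_ * Qspl m _).
  rewrite intrD intrM exprS [(n%:Z)%:~R](_ : _ = n%:R) // [(j%:Z)%:~R](_ : _ = j%:R) //.
  by rewrite mulrBr mulrA opprD addrA.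
apply: eq_bigr => f _; rewrite bspline_box_elt /child_coef -big_split /=.
apply: eq_bigr => k _; rewrite /G !tnth_mktuple; congr (_ / _ * _).
by rewrite addrAC subrr add0r.
Qed.

Lemma child_coef_gt0 a b : child n m a b -> 0 < child_coef a b.
Proof.
move=> /andP[_ /forallP hb]; apply: prodr_gt0 => k _.
apply: divr_gt0; last by apply: exprn_gt0; rewrite ltr0n.
have [_ _ ->] // := coef_refinement_mask R m (`|(tnth b.2 k - n%:Z * tnth a.2 k)%R|%N) n_gt0.
by have := hb k; lia.
Qed.

End TensorSpline.

Lemma exists_argmax_seq (T : eqType) (F : T -> nat) (s : seq T) : s != [::] ->
  exists2 a, a \in s & forall b, b \in s -> (F b <= F a)%N.
Proof.
elim: s => // x s IH _; have [->|/IH [a a_s a_max]] := eqVneq s [::].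
  by exists x => [|b]; rewrite ?mem_head // mem_seq1 => /eqP ->.
have [le_xa|lt_ax] := leqP (F x) (F a).
  exists a => [|b]; first by rewrite inE a_s orbT.
  by rewrite inE => /orP[/eqP -> | /a_max].
exists x => [|b]; first exact: mem_head.
by rewrite inE => /orP[/eqP -> // | /a_max /leq_trans]; apply; apply: ltnW.
Qed.

Section Hierarchy.
Variables (d n m : nat).

Definition in_hgen (L : seq (bidx d)) (b : bidx d) : bool :=
  (inB0 m b || in_ch n m L b) && (b \notin L).

Lemma child_level (a b : bidx d) : child n m a b -> b.1 = a.1.+1.
Proof. by case/andP => /eqP. Qed.

Lemma in_ch_filter (P : pred (bidx d)) L b :
  in_ch n m [seq a <- L | P a] b -> in_ch n m L b.
Proof. by case/hasP => a; rewrite mem_filter => /andP[_ aL] cab; apply/hasP; exists a. Qed.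

Section RemoveTop.
Variables (L : seq (bidx d)) (psi : bidx d).
Hypothesis psiL : psi \in L.
Hypothesis psi_top : forall b, b \in L -> (b.1 <= psi.1)%N.

Let L' := [seq b <- L | b != psi].

Lemma size_rem_top : (size L' < size L)%N.
Proof.
rewrite size_filter -[X in (_ < X)%N](count_predC (pred1 psi)) -add1n leq_add2r.
by rewrite -has_count; apply/hasP; exists psi => /=.
Qed.

Lemma top_not_child b : b \in L -> ~~ child n m psi b.
Proof. by move=> bL; apply/negP => /child_level e; have := psi_top bL; rewrite e ltnn. Qed.

Lemma in_ch_rem_top b : in_ch n m L b -> ~~ child n m psi b -> in_ch n m L' b.
Proof.
case/hasP => a aL cab npsi; apply/hasP; exists a => //.
by rewrite mem_filter aL andbT; apply: contraNneq _ npsi => <-.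
Qed.

Lemma lineage_rem_top : lineage n m L -> lineage n m L'.
Proof.
move=> linL b; rewrite mem_filter => /andP[bpsi bL].
case/orP: (linL b bL) => [->//|chb]; rewrite in_ch_rem_top ?orbT //.
exact: top_not_child.
Qed.

Lemma in_hgen_rem_top_psi : lineage n m L -> in_hgen L' psi.
Proof.
move=> linL; rewrite /in_hgen mem_filter eqxx andbT.
case/orP: (linL psi psiL) => [->//|chpsi]; rewrite in_ch_rem_top ?orbT //.
exact: top_not_child.
Qed.

(* The children of [psi] lie one level above all of [L], hence outside [L]. *)
Lemma in_hgen_rem_top b :
  in_hgen L b = (in_hgen L' b && (b != psi)) || child n m psi b.
Proof.
apply/idP/idP.
  case/andP=> hB bL; have [cb|npsi] := boolP (child n m psi b); first by rewrite orbT.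
  have bpsi : b != psi by apply: contraNneq _ bL => ->.
  rewrite orbF bpsi /in_hgen mem_filter negb_and bL orbT !andbT.
  by case/orP: hB => [->//|chb]; rewrite in_ch_rem_top ?orbT.
case/orP=> [/andP[/andP[hB bL'] bpsi] | cb]; rewrite /in_hgen.
  rewrite mem_filter bpsi /= in bL'; rewrite bL' andbT.
  by case/orP: hB => [->//|/in_ch_filter ->]; rewrite orbT.
apply/andP; split; first by apply/orP; right; apply/hasP; exists psi.
by apply: contraL cb; apply: top_not_child.
Qed.

End RemoveTop.

Variable R : realFieldType.
Hypothesis n_gt0 : (0 < n)%N.
Hypothesis m_gt1 : (1 < m)%N.

Definition pos_partition (U : seq (bidx d)) (S : pred (bidx d)) : Prop :=
  exists c : bidx d -> R, (forall b, S b -> 0 < c b) /\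
    forall x : 'I_d -> R, (forall k, 0 <= x k <= 1) ->
      \sum_(b <- U | S b) c b * bspline n m b x = 1.

(* Replace the term of [psi] by its positive expansion over its children. *)
Lemma pos_partition_refine (U : seq (bidx d)) (S S' : pred (bidx d)) psi :
  uniq U -> psi \in U -> (forall b, child n m psi b -> b \in U) -> S psi ->
  (forall b, S' b = (S b && (b != psi)) || child n m psi b) ->
  pos_partition U S -> pos_partition U S'.
Proof.
move=> uU psiU sub Spsi S'E [c [c_gt0 c_sum]].
pose c' b := (if S b && (b != psi) then c b else 0) +
             (if child n m psi b then c psi * child_coef R n m psi b else 0).
exists c'; split=> [b|x hx].
  rewrite S'E /c'; have [cb|ncb] := boolP (child n m psi b).
    move=> _; apply: ltr_wpDl; first by case: ifP => // /andP[/c_gt0/ltW].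
    by rewrite mulr_gt0 ?c_gt0 ?child_coef_gt0.
  by rewrite orbF addr0 => Sb; rewrite Sb c_gt0 //; case/andP: Sb.
rewrite -(c_sum x hx) [RHS]big_mkcond [RHS](bigD1_seq psi) //= Spsi -big_mkcondr.
rewrite (bspline_refine n_gt0 x uU sub) mulr_sumr [LHS]big_mkcond.
rewrite [X in _ = X + _]big_mkcond [X in _ = _ + X]big_mkcond -big_split /=.
apply: eq_bigr => b _; rewrite S'E /c'.
by case: (S b); case: eqP => [->|_]; case: (child n m _ _);
  rewrite /= ?eqxx ?andbF ?andbT; ring.
Qed.

Lemma hgen_pos_partition (L : seq (bidx d)) (U : seq (bidx d)) :
  lineage n m L -> uniq U -> (forall b, inB0 m b || in_ch n m L b -> b \in U) ->
  pos_partition U (in_hgen L).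
Proof.
have [k] := ubnP (size L); elim: k L => // k IH L; rewrite ltnS => szL linL uU subU.
have [->|neL] := eqVneq L [::].
  exists (fun=> 1); split=> // x hx.
  rewrite (eq_bigl (inB0 m)) => [|b]; last by rewrite /in_hgen orbF andbT.
  under eq_bigr do rewrite mul1r.
  by apply: sum_B0_bspline => // b B0b; apply: subU; rewrite B0b.
have [psi psiL psi_top] := exists_argmax_seq (fun b : bidx d => b.1) neL.
set L' := [seq b <- L | b != psi].
have subU' b : inB0 m b || in_ch n m L' b -> b \in U.
  by move=> hb; apply: subU; case/orP: hb => [->//|/in_ch_filter ->]; rewrite orbT.
apply: (pos_partition_refine (S := in_hgen L') uU _ _ _ (in_hgen_rem_top psiL psi_top)).
- by apply: subU'; case/andP: (in_hgen_rem_top_psi psiL psi_top linL).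
- by move=> b cb; apply: subU; apply/orP; right; apply/hasP; exists psi.
- exact: in_hgen_rem_top_psi.
apply: IH uU subU'; last exact: lineage_rem_top.
exact: leq_trans (size_rem_top psiL) szL.
Qed.

End Hierarchy.

(* [hd] is unused: the argument also covers [d = 0]. *)
Theorem lemma4p10 (R : realFieldType) (d n m : nat)
  (hd : (1 <= d)%N) (hn : (2 <= n)%N) (hm : (2 <= m)%N)
  (H : seq (bidx d)) (hH : hier_generator n m H) :
  exists c : bidx d -> R,
    (forall b, b \in H -> 0 < c b) /\
    (forall x : 'I_d -> R, (forall k, 0 <= x k <= 1) ->
       \sum_(b <- H) c b * bspline n m b x = 1).
Proof.
case: hH => L [linL [uH memH]].
have n_gt0 : (0 < n)%N by apply: leq_trans hn.
have supsetU b : inB0 m b || in_ch n m L b -> b \in undup (H ++ L).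
  by rewrite mem_undup mem_cat memH; case: (b \in L) => ->; rewrite ?orbT.
have [c [c_gt0 c_sum]] :=
  hgen_pos_partition R n_gt0 hm linL (undup_uniq (H ++ L)) supsetU.
exists c; split=> [b|x hx]; first by rewrite memH => /c_gt0.
rewrite -(c_sum x hx) -[RHS]big_filter; apply/perm_big/uniq_perm => //.
  exact: filter_uniq (undup_uniq _).
move=> b; rewrite mem_filter memH /in_hgen; case: (boolP (_ && _)) => // hb.
by rewrite supsetU //; case/andP: hb.
Qed.
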